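(* Let $\mathbb V$ be the 2-vector space of a 2-term complex $V_1\xrightarrow{\mathrm d}V_0$ and let $L\subset\mathfrak{gl}(\mathbb V)\oplus\mathbb V$ be a maximal isotropic 2-sub-vector space with characteristic pair $(\mathcal D,\pi)$, so that $L=\{X+\pi(\xi)+\xi: X\in\mathcal D,\ \xi\in\mathcal D^0\}$. Then $L$ is a Dirac structure of the omni-Lie 2-algebra if and only if, for all $\xi,\eta\in\mathcal D^0$ (both objects or both morphisms): (1) $\mathcal D$ is a sub-Lie 2-algebra of $\mathfrak{gl}(\mathbb V)$; (2) $\pi\big(\pi(\xi)(\eta)\big)-[\pi(\xi),\pi(\eta)]\in\mathcal D$; (3) $\pi(\xi)(\eta)\in\mathcal D^0$.
   Context: All vector spaces are finite-dimensional over $\mathbb R$. For a 2-term complex $V_1\xrightarrow{\mathrm d}V_0$, $\mathbb V$ has objects $V_0$, morphisms $V_0\oplus V_1$ ($u+m$), $s(u+m)=u$, $t(u+m)=u+\mathrm dm$. Let $\mathrm{End}^0_{\mathrm d}(\mathbb V)=\{A=(A_0,A_1):A_0\mathrm d=\mathrm dA_1\}$, $\mathrm{End}^1(\mathbb V)=\mathrm{Hom}(V_0,V_1)$, $\delta\phi=(\mathrm d\phi,\phi\mathrm d)$; brackets $[A,B]$ componentwise commutator, $[A,\phi]=-[\phi,A]=A_1\phi-\phi A_0$, $[\phi,\psi]_\delta=\phi\mathrm d\psi-\psi\mathrm d\phi$. The strict Lie 2-algebra $\mathfrak{gl}(\mathbb V)$ has objects $\mathrm{End}^0_{\mathrm d}(\mathbb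 V)$, morphisms $A+\phi$, $s(A+\phi)=A$, $t(A+\phi)=A+\delta\phi$, bracket $[A+\phi,B+\psi]=[A,B]+[\phi,\psi]_\delta+[A,\psi]+[\phi,B]$, and acts on $\mathbb V$ by $A(u)=A_0u$, $(A+\phi)(u+m)=A_0u+(A_1m+\phi(u+\mathrm dm))$. A 2-sub-vector space has subspaces of objects and morphisms with restricted structure maps; a sub-Lie 2-algebra of $\mathfrak{gl}(\mathbb V)$ is a 2-sub-vector space closed under the bracket. The omni-Lie 2-algebra is $\mathfrak{gl}(\mathbb V)\oplus\mathbb V$ with pairing $\langle A+\phi+u+m,B+\psi+v+n\rangle=\tfrac12((A+\phi)(v+n)+(B+\psi)(u+m))$ (objects: $\tfrac12(A(v)+B(u))$) and bracket $[\![A+\phi+u+m,B+\psi+v+n]\!]=[A+\phi,B+\psi]+\tfrac12((A+\phi)(v+n)-(B+\psi)(u+m))$ (objects: $[A,B]+\tfrac12(A(v)-B(u))$). For a 2-sub-vector space $L$, $L^\perp=\{e:\langle e,l\rangle=0\ \forall l\in L\}$; $L$ is maximal isotropic if $L=L^\perp$, and a Dirac structure if moreover closed under $[\![\cdot,\cdot]\!]$. Characteristic pair: for maximal isotropic $L$, put $\mathcal D=L\cap\mathfrak{gl}(\mathbb V)$ and $\mathcal D^0=\{\xi\in\mathbb V: X(\xi)=0\ \forall X\in\mathcal D\}$ (levelwise: objects annihilated by all objects of $\mathcal D$, morphisms annihilated by all morphisms of $\mathcal D$); a characteristic pair is $(\mathcal D,\pi)$ where $\pi:\mathbb V\to\mathfrak{gl}(\mathbb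 V)$ is a linear functor with $\pi(\xi)(\eta)=-\pi(\eta)(\xi)$ for $\xi,\eta\in\mathcal D^0$ and $L=\{X+\pi(\xi)+\xi:X\in\mathcal D,\xi\in\mathcal D^0\}$ (such $\pi$ always exists). *)

From HB Require Import structures.
From mathcomp Require Import all_boot all_order all_algebra.
Set Implicit Arguments. Unset Strict Implicit. Unset Printing Implicit Defensive.
Import Order.TTheory GRing.Theory Num.Theory.
Local Open Scope ring_scope.

Definition subspace (R : nzRingType) (T : lmodType R) (P : T -> Prop) : Prop :=
  P 0 /\ forall (a : R) (x y : T), P x -> P y -> P (a *: x + y).

Definition linmap (R : nzRingType) (U W : lmodType R) (f : U -> W) : Prop :=
  forall (a : R) (x y : U), f (a *: x + y) = a *: f x + f y.

(* A 2-sub-vector space of a 2-vector space whose objects are the elements of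
   an ambient predicate ambO in O, morphisms the elements of ambM in M, with
   source s, target t, identity i and composition comp (comp f g = f o g,
   defined when t g = s f). *)
Definition sub2 (R : nzRingType) (O M : lmodType R) (ambO : O -> Prop) (ambM : M -> Prop)
  (s t : M -> O) (i : O -> M) (comp : M -> M -> M) (P0 : O -> Prop) (P1 : M -> Prop) : Prop :=
  [/\ subspace P0 /\ subspace P1,
      (forall x, P0 x -> ambO x) /\ (forall f, P1 f -> ambM f),
      (forall f, P1 f -> P0 (s f) /\ P0 (t f)),
      (forall x, P0 x -> P1 (i x)) &
      (forall f g, P1 f -> P1 g -> t g = s f -> P1 (comp f g))].

Section Omni.
Variables (R : realFieldType) (V0 V1 : vectType R) (d : 'Hom(V1, V0)).

(* candidates for objects of gl(V): pairs (A0, A1) *)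
Definition End0 := ('End(V0) * 'End(V1))%type.
(* morphisms of gl(V): A + phi *)
Definition glMor := (End0 * 'Hom(V0, V1))%type.
(* morphisms of V: u + m *)
Definition VMor := (V0 * V1)%type.
Definition OObj := (End0 * V0)%type.
Definition OMor := (glMor * VMor)%type.

Definition isEnd0 (A : End0) : Prop := (A.1 \o d)%VF = (d \o A.2)%VF.

Definition delta (phi : 'Hom(V0, V1)) : End0 := ((d \o phi)%VF, (phi \o d)%VF).

Definition brE (A B : End0) : End0 :=
  ((A.1 \o B.1)%VF - (B.1 \o A.1)%VF, (A.2 \o B.2)%VF - (B.2 \o A.2)%VF).
(* [A, phi] = A1 phi - phi A0 ; [phi, B] = - [B, phi] *)
Definition brEH (A : End0) (phi : 'Hom(V0, V1)) : 'Hom(V0, V1) :=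
  (A.2 \o phi)%VF - (phi \o A.1)%VF.
Definition brHH (phi psi : 'Hom(V0, V1)) : 'Hom(V0, V1) :=
  (phi \o d \o psi)%VF - (psi \o d \o phi)%VF.
Definition brgl (X Y : glMor) : glMor :=
  (brE X.1 Y.1, brHH X.2 Y.2 + brEH X.1 Y.2 - brEH Y.1 X.2).

Definition actO (A : End0) (u : V0) : V0 := A.1 u.
Definition actM (X : glMor) (xi : VMor) : VMor :=
  (X.1.1 xi.1, X.1.2 xi.2 + X.2 (xi.1 + d xi.2)).

Definition glS (X : glMor) : End0 := X.1.
Definition glT (X : glMor) : End0 := X.1 + delta X.2.
Definition glI (A : End0) : glMor := (A, 0).
Definition glC (X Y : glMor) : glMor := (Y.1, Y.2 + X.2).

Definition VS (xi : VMor) : V0 := xi.1.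
Definition VT (xi : VMor) : V0 := xi.1 + d xi.2.
Definition VI (u : V0) : VMor := (u, 0).
Definition VC (xi eta : VMor) : VMor := (eta.1, eta.2 + xi.2).

Definition OS (e : OMor) : OObj := (glS e.1, VS e.2).
Definition OT (e : OMor) : OObj := (glT e.1, VT e.2).
Definition OI (x : OObj) : OMor := (glI x.1, VI x.2).
Definition OC (e f : OMor) : OMor := (glC e.1 f.1, VC e.2 f.2).

Definition ambO (x : OObj) : Prop := isEnd0 x.1.
Definition ambM (e : OMor) : Prop := isEnd0 e.1.1.

Definition pairO (e f : OObj) : V0 := 2^-1 *: (actO e.1 f.2 + actO f.1 e.2).
Definition pairM (e f : OMor) : VMor := 2^-1 *: (actM e.1 f.2 + actM f.1 e.2).
Definition brO (e f : OObj) : OObj := (brE e.1 f.1, 2^-1 *: (actO e.1 f.2 - actO f.1 e.2)).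
Definition brM (e f : OMor) : OMor := (brgl e.1 f.1, 2^-1 *: (actM e.1 f.2 - actM f.1 e.2)).

Definition sub2_omni (L0 : OObj -> Prop) (L1 : OMor -> Prop) : Prop :=
  sub2 ambO ambM OS OT OI OC L0 L1.

Definition max_isotropic (L0 : OObj -> Prop) (L1 : OMor -> Prop) : Prop :=
  [/\ sub2_omni L0 L1,
      (forall e, L0 e <-> (ambO e /\ forall l, L0 l -> pairO e l = 0)) &
      (forall e, L1 e <-> (ambM e /\ forall l, L1 l -> pairM e l = 0))].

Definition dirac (L0 : OObj -> Prop) (L1 : OMor -> Prop) : Prop :=
  [/\ max_isotropic L0 L1,
      (forall e f, L0 e -> L0 f -> L0 (brO e f)) &
      (forall e f, L1 e -> L1 f -> L1 (brM e f))].

Definition sub_Lie2 (D0 : End0 -> Prop) (D1 : glMor -> Prop) : Prop :=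
  [/\ sub2 isEnd0 (fun X : glMor => isEnd0 X.1) glS glT glI glC D0 D1,
      (forall A B, D0 A -> D0 B -> D0 (brE A B)) &
      (forall X Y, D1 X -> D1 Y -> D1 (brgl X Y))].

(* D = L cap gl(V) *)
Definition Dobj (L0 : OObj -> Prop) (A : End0) : Prop := L0 (A, 0).
Definition Dmor (L1 : OMor -> Prop) (X : glMor) : Prop := L1 (X, 0).

Definition Ann0 (L0 : OObj -> Prop) (u : V0) : Prop :=
  forall A, Dobj L0 A -> actO A u = 0.
Definition Ann1 (L1 : OMor -> Prop) (xi : VMor) : Prop :=
  forall X, Dmor L1 X -> actM X xi = 0.

Definition lin_functor (p0 : V0 -> End0) (p1 : VMor -> glMor) : Prop :=
  [/\ linmap p0 /\ linmap p1,
      (forall u, isEnd0 (p0 u)) /\ (forall xi, isEnd0 (p1 xi).1),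
      (forall xi, glS (p1 xi) = p0 (VS xi)) /\ (forall xi, glT (p1 xi) = p0 (VT xi)),
      (forall u, p1 (VI u) = glI (p0 u)) &
      (forall xi eta, VT eta = VS xi -> p1 (VC xi eta) = glC (p1 xi) (p1 eta))].

Definition char_pair (L0 : OObj -> Prop) (L1 : OMor -> Prop)
  (p0 : V0 -> End0) (p1 : VMor -> glMor) : Prop :=
  [/\ lin_functor p0 p1,
      (forall xi eta, Ann0 L0 xi -> Ann0 L0 eta -> actO (p0 xi) eta = - actO (p0 eta) xi),
      (forall xi eta, Ann1 L1 xi -> Ann1 L1 eta -> actM (p1 xi) eta = - actM (p1 eta) xi),
      (forall e, L0 e <-> exists X xi, [/\ Dobj L0 X, Ann0 L0 xi & e = (X + p0 xi, xi)]) &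
      (forall e, L1 e <-> exists X xi, [/\ Dmor L1 X, Ann1 L1 xi & e = (X + p1 xi, xi)])].

End Omni.

From mathcomp Require Import all_boot all_algebra.
Set Implicit Arguments. Unset Strict Implicit. Unset Printing Implicit Defensive.
Import GRing.Theory Num.Theory.
Local Open Scope ring_scope.

(* Maximal isotropy says that
   D is exactly the annihilator of D^0 among the admissible elements of gl.
   Since D annihilates D^0 and pi is skew on D^0, the bracket of (X + pi xi, xi)
   and (Y + pi eta, eta) is (B, pi(xi)(eta)) with B = [X + pi xi, Y + pi eta], so
   it lies in L iff pi(xi)(eta) is in D^0, which is (3), and B - pi(pi(xi)(eta))
   annihilates D^0; given (3), B acts on D^0 as [pi xi, pi eta], which turns the
   latter into (2).  Brackets of elements of D give the bracket part of (1); its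
   sub-2-space part is inherited from L. *)

Section Subspace.
Variables (R : nzRingType) (T : lmodType R).
Implicit Types (P : T -> Prop) (x y : T).

Lemma subspaceD P x y : subspace P -> P x -> P y -> P (x + y).
Proof. by move=> [_ HP] Px Py; have := HP 1 _ _ Px Py; rewrite scale1r. Qed.

Lemma subspaceN P x : subspace P -> P x -> P (- x).
Proof. by move=> [P0 HP] Px; have := HP (-1) _ _ Px P0; rewrite scaleN1r addr0. Qed.

Lemma subspaceB P x y : subspace P -> P x -> P y -> P (x - y).
Proof. by move=> sP Px Py; apply: subspaceD => //; apply: subspaceN. Qed.

End Subspace.

Lemma subspace_slice (R : nzRingType) (T U : lmodType R) (P : T * U -> Prop) :
  subspace P -> subspace (fun x => P (x, 0)).
Proof.
move=> [P0 HP]; split=> // a x y Px Py.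
have E : a *: (x, 0) + (y, 0) = (a *: x + y, a *: 0 + 0) :> T * U by [].
by have := HP a _ _ Px Py; rewrite E scaler0 addr0.
Qed.

Lemma sub2_slice (R : nzRingType) (O1 O2 M1 M2 : lmodType R)
    (amb0 : O1 -> Prop) (amb1 : M1 -> Prop)
    (s1 t1 : M1 -> O1) (i1 : O1 -> M1) (c1 : M1 -> M1 -> M1)
    (s2 t2 : M2 -> O2) (i2 : O2 -> M2) (c2 : M2 -> M2 -> M2)
    (L0 : O1 * O2 -> Prop) (L1 : M1 * M2 -> Prop) :
  s2 0 = 0 -> t2 0 = 0 -> i2 0 = 0 -> c2 0 0 = 0 ->
  sub2 (fun x => amb0 x.1) (fun f => amb1 f.1)
    (fun f => (s1 f.1, s2 f.2)) (fun f => (t1 f.1, t2 f.2))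
    (fun x => (i1 x.1, i2 x.2)) (fun f g => (c1 f.1 g.1, c2 f.2 g.2)) L0 L1 ->
  sub2 amb0 amb1 s1 t1 i1 c1 (fun x => L0 (x, 0)) (fun f => L1 (f, 0)).
Proof.
move=> s0 t0 i0 c0 [[sL0 sL1] [aL0 aL1] Lst Li Lc].
split.
- by split; apply: subspace_slice.
- by split=> [x /aL0 | f /aL1].
- by move=> f /Lst; rewrite s0 t0.
- by move=> x /Li; rewrite i0.
- move=> f g Lf Lg fg; have := Lc _ _ Lf Lg; rewrite c0; apply.
  by rewrite /= s0 t0 fg.
Qed.

Lemma scaleV2_double (R : numFieldType) (T : lmodType R) (a : T) :
  2^-1 *: (a + a) = a.
Proof. by rewrite -mulr2n -scaler_nat scalerA mulVf ?scale1r // pnatr_eq0. Qed.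

Section GraphLevel.
Variables (R : numFieldType) (G W : lmodType R).
Variables (amb : G -> Prop) (act : G -> W -> W) (br : G -> G -> G).
Hypothesis amb_subspace : subspace amb.
Hypothesis amb_br : forall X Y, amb X -> amb Y -> amb (br X Y).
Hypothesis actBl : forall X Y w, act (X - Y) w = act X w - act Y w.
Hypothesis act0r : forall X, act X 0 = 0.
Hypothesis act_br : forall X Y w, amb X -> amb Y ->
  act (br X Y) w = act X (act Y w) - act Y (act X w).

Lemma act0l w : act 0 w = 0.
Proof. by apply/eqP; rewrite -(subrr (act 0 w)) -actBl subrr. Qed.

Lemma actNl X w : act (- X) w = - act X w.
Proof. by rewrite -sub0r actBl act0l sub0r. Qed.

Lemma actDl X Y w : act (X + Y) w = act X w + act Y w.
Proof. by rewrite -{1}[Y]opprK actBl actNl opprK. Qed.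

Definition pairing (e f : G * W) : W := 2^-1 *: (act e.1 f.2 + act f.1 e.2).
Definition bracket (e f : G * W) : G * W :=
  (br e.1 f.1, 2^-1 *: (act e.1 f.2 - act f.1 e.2)).

Variables (L : G * W -> Prop) (p : W -> G).

Definition slice (X : G) : Prop := L (X, 0).
Definition annihilator (xi : W) : Prop := forall X, slice X -> act X xi = 0.

Hypothesis L_isotropic : forall e, L e <-> amb e.1 /\ (forall l, L l -> pairing e l = 0).
Hypothesis L_graph : forall e,
  L e <-> exists X xi, [/\ slice X, annihilator xi & e = (X + p xi, xi)].
Hypothesis p_skew : forall xi eta, annihilator xi -> annihilator eta ->
  act (p xi) eta = - act (p eta) xi.
Hypothesis p_amb : forall xi, amb (p xi).

Lemma slice_amb X : slice X -> amb X.
Proof. by case/L_isotropic. Qed.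

Lemma graph_mem X xi : slice X -> annihilator xi -> L (X + p xi, xi).
Proof. by move=> DX Axi; apply/L_graph; exists X, xi. Qed.

Lemma sliceP X : slice X <-> amb X /\ (forall th, annihilator th -> act X th = 0).
Proof.
split=> [DX | [aX XA]]; first by split=> [|th /(_ X DX)]; [apply: slice_amb|].
apply/L_isotropic; split=> // _ /L_graph [Z [th [_ Ath ->]]].
by rewrite /pairing /= XA // act0r addr0 scaler0.
Qed.

Lemma bracket_graph X Y xi eta :
  slice X -> slice Y -> annihilator xi -> annihilator eta ->
  bracket (X + p xi, xi) (Y + p eta, eta) =
  (br (X + p xi) (Y + p eta), act (p xi) eta).
Proof.
move=> DX DY Axi Aeta; rewrite /bracket /= !actDl (Aeta _ DX) (Axi _ DY) !add0r.
by rewrite (p_skew Aeta Axi) opprK scaleV2_double.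
Qed.

Lemma sliceN X : slice X -> slice (- X).
Proof.
case/sliceP=> aX XA; apply/sliceP; split; first exact: subspaceN.
by move=> th /XA; rewrite actNl => ->; rewrite oppr0.
Qed.

Lemma act_br_graph X Y xi eta th :
  (forall xi eta, annihilator xi -> annihilator eta -> annihilator (act (p xi) eta)) ->
  slice X -> slice Y -> annihilator xi -> annihilator eta -> annihilator th ->
  act (br (X + p xi) (Y + p eta)) th = act (br (p xi) (p eta)) th.
Proof.
move=> p_act_ann DX DY Axi Aeta Ath.
have aXp : amb (X + p xi) by apply: subspaceD => //; apply: slice_amb.
have aYp : amb (Y + p eta) by apply: subspaceD => //; apply: slice_amb.
rewrite !act_br // !actDl (Ath _ DX) (Ath _ DY) !add0r.
by rewrite (p_act_ann _ _ Aeta Ath _ DX) (p_act_ann _ _ Axi Ath _ DY) !add0r.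
Qed.

Lemma bracket_closedP :
  (forall e f, L e -> L f -> L (bracket e f)) <->
  [/\ forall X Y, slice X -> slice Y -> slice (br X Y),
      (forall xi eta, annihilator xi -> annihilator eta ->
         slice (p (act (p xi) eta) - br (p xi) (p eta))) &
      (forall xi eta, annihilator xi -> annihilator eta -> annihilator (act (p xi) eta))].
Proof.
split=> [L_br | [D_br D_p p_act_ann]].
  have D0 : slice 0.
    by apply/sliceP; split=> [|th _]; [case: amb_subspace | exact: act0l].
  have br_graph xi eta : annihilator xi -> annihilator eta ->
      exists Z, [/\ slice Z, br (p xi) (p eta) = Z + p (act (p xi) eta)
                   & annihilator (act (p xi) eta)].
    move=> Axi Aeta; have := L_br _ _ (graph_mem D0 Axi) (graph_mem D0 Aeta).
    rewrite bracket_graph // !add0r => /L_graph [Z [z [DZ Az E]]].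
    by case: E => E1 E2; exists Z; rewrite E1 E2.
  split=> [X Y DX DY | xi eta Axi Aeta | xi eta Axi Aeta].
  - by have := L_br _ _ DX DY; rewrite /bracket /= !act0r subrr scaler0.
  - have [Z [DZ -> _]] := br_graph _ _ Axi Aeta.
    by rewrite opprD addrCA subrr addr0; apply: sliceN.
  - by have [Z []] := br_graph _ _ Axi Aeta.
move=> _ _ /L_graph [X [xi [DX Axi ->]]] /L_graph [Y [eta [DY Aeta ->]]].
rewrite bracket_graph //; set z := act (p xi) eta.
apply/L_graph; exists (br (X + p xi) (Y + p eta) - p z), z.
split; [apply/sliceP; split | exact: p_act_ann | by rewrite subrK].
  apply: subspaceB => //; apply: amb_br; apply: subspaceD => //; exact: slice_amb.
move=> th Ath; rewrite actBl act_br_graph //.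
have /sliceP [_ /(_ th Ath)] := D_p _ _ Axi Aeta.
by rewrite actBl => /eqP; rewrite subr_eq0 eq_sym => /eqP ->; rewrite subrr.
Qed.

End GraphLevel.

Section OmniLevels.
Variables (R : realFieldType) (V0 V1 : vectType R) (d : 'Hom(V1, V0)).

Lemma isEnd0_subspace : subspace (isEnd0 d).
Proof.
split=> [|a A B HA HB]; first by rewrite /isEnd0 /= comp_lfun0l comp_lfun0r.
by rewrite /isEnd0 /= comp_lfunDl comp_lfunDr -comp_lfunZl -comp_lfunZr HA HB.
Qed.

Lemma isEnd0_fst_subspace : subspace (fun X : glMor V0 V1 => isEnd0 d X.1).
Proof. by case: isEnd0_subspace => HX H; split=> // a X Y; apply: H. Qed.

Lemma isEnd0_brE A B : isEnd0 d A -> isEnd0 d B -> isEnd0 d (brE A B).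
Proof.
rewrite /isEnd0 /= => HA HB.
rewrite comp_lfunDl comp_lfunDr comp_lfunNl comp_lfunNr -!comp_lfunA HA HB.
by rewrite !comp_lfunA HA HB.
Qed.

Lemma actO_subl (A B : End0 V0 V1) u : actO (A - B) u = actO A u - actO B u.
Proof. by rewrite /actO /= add_lfunE opp_lfunE. Qed.

Lemma actO_brE (A B : End0 V0 V1) u :
  actO (brE A B) u = actO A (actO B u) - actO B (actO A u).
Proof. by rewrite /actO /= add_lfunE opp_lfunE !comp_lfunE. Qed.

Lemma actM_subl (X Y : glMor V0 V1) xi : actM d (X - Y) xi = actM d X xi - actM d Y xi.
Proof.
rewrite /actM /= !add_lfunE !opp_lfunE.
by congr (_, _); rewrite /= opprD addrACA.
Qed.

Lemma actM0r (X : glMor V0 V1) : actM d X 0 = 0.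
Proof. by rewrite /actM /= !linear0 addr0 linear0 addr0. Qed.

Lemma lfunD (U W : vectType R) (f : 'Hom(U, W)) a b : f (a + b) = f a + f b.
Proof. exact: linearD. Qed.

Lemma actM_brgl (X Y : glMor V0 V1) xi : isEnd0 d X.1 -> isEnd0 d Y.1 ->
  actM d (brgl d X Y) xi = actM d X (actM d Y xi) - actM d Y (actM d X xi).
Proof.
rewrite /isEnd0 => HX HY.
have dX v : X.1.1 (d v) = d (X.1.2 v) by rewrite -!comp_lfunE HX.
have dY v : Y.1.1 (d v) = d (Y.1.2 v) by rewrite -!comp_lfunE HY.
case: xi => u m; rewrite /actM /brgl /brE /brEH /brHH /=.
rewrite !add_lfunE !opp_lfunE !add_lfunE !opp_lfunE !comp_lfunE.
congr (_, _) => /=.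
have Xw : X.1.1 u + d (X.1.2 m + X.2 (u + d m)) = X.1.1 (u + d m) + d (X.2 (u + d m)).
  by rewrite [in LHS]lfunD addrA -dX -lfunD.
have Yw : Y.1.1 u + d (Y.1.2 m + Y.2 (u + d m)) = Y.1.1 (u + d m) + d (Y.2 (u + d m)).
  by rewrite [in LHS]lfunD addrA -dY -lfunD.
rewrite Xw Yw {Xw Yw}; move: (u + d m) => w.
rewrite !lfunD opprB !opprD !addrA.
(* Both sides are sums of the same eight terms. *)
by rewrite [LHS](ACl (1*5*7*3*2*8*6*4)).
Qed.

End OmniLevels.

Theorem mainTheorem8 (R : realFieldType) (V0 V1 : vectType R) (d : 'Hom(V1, V0))
  (L0 : OObj V0 V1 -> Prop) (L1 : OMor V0 V1 -> Prop)
  (p0 : V0 -> End0 V0 V1) (p1 : VMor V0 V1 -> glMor V0 V1) :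
  max_isotropic d L0 L1 ->
  char_pair d L0 L1 p0 p1 ->
  dirac d L0 L1 <->
  [/\ sub_Lie2 d (Dobj L0) (Dmor L1),
      (forall xi eta, Ann0 L0 xi -> Ann0 L0 eta ->
         Dobj L0 (p0 (actO (p0 xi) eta) - brE (p0 xi) (p0 eta))),
      (forall xi eta, Ann1 d L1 xi -> Ann1 d L1 eta ->
         Dmor L1 (p1 (actM d (p1 xi) eta) - brgl d (p1 xi) (p1 eta))),
      (forall xi eta, Ann0 L0 xi -> Ann0 L0 eta -> Ann0 L0 (actO (p0 xi) eta)) &
      (forall xi eta, Ann1 d L1 xi -> Ann1 d L1 eta -> Ann1 d L1 (actM d (p1 xi) eta))].
Proof.
move=> HL [[_ [p0_amb p1_amb] _ _ _] skew0 skew1 graph0 graph1].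
have [sub2L iso0 iso1] := HL.
have sub2D : sub2 (isEnd0 d) (fun X : glMor V0 V1 => isEnd0 d X.1)
    (@glS _ V0 V1) (glT d) (@glI _ V0 V1) (@glC _ V0 V1) (Dobj L0) (Dmor L1).
  apply: (sub2_slice _ _ _ _ sub2L) => //; first by rewrite /VT /= linear0 addr0.
  by rewrite /VC /= addr0.
have levelO := bracket_closedP (isEnd0_subspace d) (@isEnd0_brE _ _ _ d)
  (@actO_subl _ _ _) (fun A => linear0 A.1) (fun A B u _ _ => actO_brE A B u)
  iso0 graph0 skew0 p0_amb.
have levelM := bracket_closedP (br := brgl d) (isEnd0_fst_subspace d)
  (fun X Y => @isEnd0_brE _ _ _ d X.1 Y.1)
  (@actM_subl _ _ _ d) (@actM0r _ _ _ d) (@actM_brgl _ _ _ d)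
  iso1 graph1 skew1 p1_amb.
rewrite /dirac /sub_Lie2.
split=> [[_ /levelO [DbrO D2O A3O] /levelM [DbrM D2M A3M]] | ].
  by split.
case=> [[_ DbrO DbrM] D2O D2M A3O A3M].
by split=> //; [apply/levelO | apply/levelM].
Qed.
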